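(* Let $a>1$ be an integer. If $n_1$ and $n_2$ are overpseudoprimes to base $a$ with $h_a(n_1)\neq h_a(n_2)$, then $\gcd(n_1,n_2)=1$.
   Context: For an integer $a>1$ and an odd integer $n>1$ with $\gcd(a,n)=1$: $h_a(n)$ denotes the multiplicative order of $a$ modulo $n$. A cyclotomic coset of $a$ modulo $n$ is a set of the form $\{\, s a^j \bmod n : j\ge 0\,\}$ with $s\in\{1,\dots,n-1\}$; these cosets partition $\{1,\dots,n-1\}$, and $r_a(n)$ denotes the number of distinct cyclotomic cosets of $a$ modulo $n$. An odd composite number $n$ coprime to $a$ is called an overpseudoprime to base $a$ if $n=r_a(n)\,h_a(n)+1$. *)

From mathcomp Require Import all_boot.
Set Implicit Arguments. Unset Strict Implicit. Unset Printing Implicit Defensive.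

Definition is_mult_order (a n k : nat) : Prop :=
  [/\ 0 < k, a ^ k = 1 %[mod n] &
      forall m, 0 < m -> a ^ m = 1 %[mod n] -> k <= m].

(* Exponents j range over 0..n-1, which covers a full
   period since a^j mod n is periodic with period h_a(n) <= n-1
   (for gcd(a,n)=1, n>1). *)
Definition cyc_coset (a n s : nat) : {set 'I_n} :=
  [set x : 'I_n | [exists j : 'I_n, nat_of_ord x == (s * a ^ j) %% n]].

Definition num_cosets (a n : nat) : nat :=
  #|[set cyc_coset a n (nat_of_ord s) | s : 'I_n & 0 < nat_of_ord s]|.

Definition overpseudoprime (a n : nat) : Prop :=
  [/\ odd n, 1 < n, ~~ prime n, coprime a n &
      exists h, is_mult_order a n h /\ n = num_cosets a n * h + 1].

From mathcomp Require Import all_boot.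
Set Implicit Arguments. Unset Strict Implicit. Unset Printing Implicit Defensive.

(* Let n be an overpseudoprime to base a with h = h_a(n).
   Every cyclotomic coset of a modulo n has at most h elements, since
   s a^j mod n only depends on j mod h; and the r_a(n) cosets with
   generator in {1,...,n-1} cover these n - 1 = r_a(n) h residues.  Hence
   every such coset has exactly h elements.
   Now let d > 1 be a common divisor of two overpseudoprimes n1, n2.  The
   coset of n1/d modulo n1 is non-trivial, so it has h_a(n1) elements; but
   (n1/d) a^j mod n1 only depends on a^j mod d, which is periodic with
   period h_a(n2) because d | n2.  Thus h_a(n1) <= h_a(n2), and by symmetry
   the two orders are equal. *)

Lemma expn_mod_period (a m d j : nat) :
  a ^ m = 1 %[mod d] -> a ^ j = a ^ (j %% m) %[mod d].
Proof.
move=> am1; rewrite {1}(divn_eq j m) expnD [j %/ m * m]mulnC expnM.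
by rewrite -modnMml -modnXm am1 modnXm exp1n modnMml mul1n.
Qed.

Lemma card_cyc_coset_le_period (a n s m : nat) : 0 < m ->
  (forall j, s * a ^ j = s * a ^ (j %% m) %[mod n]) -> #|cyc_coset a n s| <= m.
Proof.
move=> m_gt0 periodic; case: n periodic => [|n] periodic.
  by rewrite (_ : cyc_coset _ _ _ = set0) ?cards0 //; apply/setP => -[].
pose elt (j : 'I_m) : 'I_n.+1 := inord ((s * a ^ j) %% n.+1).
have sub_img : cyc_coset a n.+1 s \subset elt @: setT.
  apply/subsetP => x; rewrite inE => /existsP [j /eqP x_eq].
  apply/imsetP; exists (Ordinal (ltn_pmod j m_gt0)) => //.
  by apply: val_inj; rewrite /elt /= inordK ?ltn_pmod // -periodic -x_eq.
apply: leq_trans (subset_leq_card sub_img) _.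
by apply: leq_trans (leq_imset_card _ _) _; rewrite cardsT card_ord.
Qed.

Lemma card_cyc_coset_le_order (a n s h : nat) :
  is_mult_order a n h -> #|cyc_coset a n s| <= h.
Proof.
case=> h_gt0 ah1 _; apply: card_cyc_coset_le_period => // j.
by rewrite -modnMmr (expn_mod_period j ah1) modnMmr.
Qed.

(* If n = k d, the coset of k modulo n only depends on a^j modulo d, so its
   size is bounded by any period of the powers of a modulo d. *)
Lemma card_cyc_coset_cofactor_le (a n d m : nat) : d %| n -> 0 < m ->
  a ^ m = 1 %[mod d] -> #|cyc_coset a n (n %/ d)| <= m.
Proof.
move=> dvd_dn m_gt0 am1; apply: card_cyc_coset_le_period => // j.
set k := n %/ d; have -> : n = k * d by rewrite divnK.
by rewrite -!muln_modr (expn_mod_period j am1).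
Qed.

Lemma cyc_cosets_cover (a n : nat) :
  n.-1 <= \sum_(B in [set cyc_coset a n (nat_of_ord t) | t : 'I_n & 0 < t]) #|B|.
Proof.
case: n => [|n] //; apply: leq_trans (leq_card_cover _).
have -> : n.+1.-1 = #|[set~ (ord0 : 'I_n.+1)]| by rewrite cardsC1 card_ord.
apply: subset_leq_card.
apply/subsetP => x; rewrite !inE => x_neq0; apply/bigcupP.
exists (cyc_coset a n.+1 x).
  apply/imsetP; exists x => //; rewrite inE lt0n.
  by apply: contra x_neq0 => /eqP x0; apply/eqP/val_inj.
by rewrite inE; apply/existsP; exists ord0; rewrite expn0 muln1 modn_small.
Qed.

Lemma is_mult_order_uniq (a n h h' : nat) :
  is_mult_order a n h -> is_mult_order a n h' -> h = h'.
Proof.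
by case=> h_gt0 ah1 h_min [h'_gt0 ah'1 h'_min]; apply/eqP; rewrite eqn_leq h_min ?h'_min.
Qed.

Lemma overpseudoprime_card_cyc_coset (a n h s : nat) :
  overpseudoprime a n -> is_mult_order a n h -> 0 < s < n ->
  #|cyc_coset a n s| = h.
Proof.
case=> _ _ _ _ [h' [ord_h' n_eq]] ord_h /andP [s_gt0 s_lt_n].
rewrite -(is_mult_order_uniq ord_h ord_h') in n_eq.
set P := [set cyc_coset a n (nat_of_ord t) | t : 'I_n & 0 < t] in n_eq.
have small B : B \in P -> #|B| <= h.
  by case/imsetP=> t _ ->; apply: card_cyc_coset_le_order ord_h.
have all_full : \sum_(B in P) #|B| = \sum_(B in P) h.
  apply/eqP; rewrite eqn_leq leq_sum //= sum_nat_const.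
  by rewrite -[_ * h](addnK 1) -n_eq subn1 cyc_cosets_cover.
have [_] := leqif_sum (P := mem P) (fun B PB => leqif_eq (small B PB)).
move/eqP: all_full => -> /esym /forall_inP full.
have coset_in_P : cyc_coset a n s \in P.
  by apply/imsetP; exists (Ordinal s_lt_n); rewrite ?inE.
exact/eqP/full.
Qed.

(* If two overpseudoprimes n1, n2 share a divisor d > 1, then
   h_a(n1) <= h_a(n2): the coset of n1/d modulo n1 has h_a(n1) elements,
   but its size is at most h_a(n2) because a^(h_a(n2)) = 1 (mod d). *)
Lemma order_le_of_common_divisor (a n1 n2 h1 h2 d : nat) :
  1 < d -> d %| n1 -> d %| n2 ->
  overpseudoprime a n1 -> is_mult_order a n1 h1 -> is_mult_order a n2 h2 ->
  h1 <= h2.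
Proof.
move=> d_gt1 dvd_dn1 dvd_dn2 op1 ord1 [h2_gt0 ah2 _].
have n1_gt0 : 0 < n1 by case: op1 => _ /ltnW.
have cofactor_lt : 0 < n1 %/ d < n1.
  by rewrite divn_gt0 ?(ltnW d_gt1) // dvdn_leq //= ltn_Pdiv.
rewrite -(overpseudoprime_card_cyc_coset op1 ord1 cofactor_lt).
apply: card_cyc_coset_cofactor_le => //.
by rewrite -(modn_dvdm _ dvd_dn2) ah2 modn_dvdm.
Qed.

Theorem corollary1 (a n1 n2 h1 h2 : nat) :
  1 < a ->
  overpseudoprime a n1 -> overpseudoprime a n2 ->
  is_mult_order a n1 h1 -> is_mult_order a n2 h2 ->
  h1 <> h2 ->
  coprime n1 n2.
Proof.
move=> _ op1 op2 ord1 ord2 h_neq; apply/negPn/negP => not_coprime.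
have n1_gt0 : 0 < n1 by case: op1 => _ /ltnW.
have gcd_gt1 : 1 < gcdn n1 n2 by rewrite ltn_neqAle eq_sym not_coprime gcdn_gt0 n1_gt0.
apply: h_neq; apply/eqP; rewrite eqn_leq.
rewrite (order_le_of_common_divisor gcd_gt1 (dvdn_gcdl _ _) (dvdn_gcdr _ _) op1 ord1 ord2).
by rewrite (order_le_of_common_divisor gcd_gt1 (dvdn_gcdr _ _) (dvdn_gcdl _ _) op2 ord2 ord1).
Qed.
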